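(* Let $\Omega$ be a domain, $G\subset\mathbb{C}$ a closed set with empty interior, $\Phi=(\phi_n)_n$ a sequence of continuous mappings from $G$ to $\Omega$, and $\mathcal{M}$ a countable family of compact subsets of $G$. If there exists a $(\Phi,\mathcal{M})$-universal function in $H(\Omega)$, then for any compact set $L\subset\Omega$, any $K\in\mathcal{M}$ and any disjoint $I_1,I_2\in\mathcal{M}$ with $K\cup I_1\cup I_2\in\mathcal{M}$, there exist infinitely many $n\in\mathbb{N}$ such that both $\phi_n(K)\cap L=\emptyset$ and $\phi_n(I_1)\cap\phi_n(I_2)=\emptyset$.
   Context: $H(\Omega)$ is the Fréchet space of holomorphic functions on $\Omega$ with the locally uniform topology; $\mathcal{C}(K)$ is the Banach space of continuous functions on $K$ with the sup norm. $f\in H(\Omega)$ is $(\Phi,\mathcal{M})$-universal if for every $K\in\mathcal{M}$ the set $\{f\circ\phi_n|_K:\,n\in\mathbb{N}\}$ is dense in $\mathcal{C}(K)$. *)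

From Stdlib Require Import Reals List.
From Coquelicot Require Import Coquelicot.
Open Scope R_scope.

Definition Ccompact (K : C -> Prop) : Prop :=
  forall (I : Type) (U : I -> C -> Prop),
    (forall i, open (U i)) ->
    (forall z, K z -> exists i, U i z) ->
    exists l : list I, forall z, K z -> exists i, In i l /\ U i z.

Definition Cdomain (Om : C -> Prop) : Prop :=
  open Om /\ (exists z, Om z) /\
  forall A B : C -> Prop, open A -> open B ->
    (forall z, Om z -> A z \/ B z) ->
    (forall z, Om z -> A z -> B z -> False) ->
    (exists z, Om z /\ A z) -> (exists z, Om z /\ B z) -> False.

Definition empty_interior (G : C -> Prop) : Prop :=
  forall U : C -> Prop, open U -> (forall z, U z -> G z) -> forall z, ~ U z.

Definition continuous_on_set (A : C -> Prop) (h : C -> C) : Prop :=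
  forall z, A z -> forall eps : R, 0 < eps -> exists delta : R, 0 < delta /\
    forall w, A w -> Cmod (w - z) < delta -> Cmod (h w - h z) < eps.

Definition holomorphic_on (Om : C -> Prop) (f : C -> C) : Prop :=
  forall z, Om z -> @ex_derive C_AbsRing C_NormedModule f z.

Definition countable_family (M : (C -> Prop) -> Prop) : Prop :=
  exists h : (C -> Prop) -> nat, forall A B, M A -> M B -> h A = h B -> A = B.

(* (Phi, M)-universality: for each K in M, {f o phi_n |_K} is dense in C(K)
   for the sup norm. *)
Definition universal (f : C -> C) (phi : nat -> C -> C)
  (M : (C -> Prop) -> Prop) : Prop :=
  forall K, M K -> forall g : C -> C, continuous_on_set K g ->
    forall eps : R, 0 < eps ->
      exists n : nat, forall z, K z -> Cmod (f (phi n z) - g z) < eps.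

From Stdlib Require Import Reals List Lia Lra Classical.
From Coquelicot Require Import Coquelicot.
Open Scope R_scope.

(* Approximate the translation [z |-> z + A] on [K u I1 u I2] by [f o phi_n].
   For [A] large, [f (phi_n z)] is then larger than every value of [f] on the
   compact set [L], so [phi_n z] avoids [L]; and [phi_n z = phi_n w] would give
   [|z - w| < 2 eps], impossible once [eps] is below half the distance from
   [I1] to [I2].  Such [n] exist beyond any bound [N], because perturbing the
   target by a small constant defeats any finitely many indices. *)

Lemma Cmod_le_add_sub (a b : C) : Cmod a <= Cmod b + Cmod (a - b).
Proof. replace a with (b + (a - b))%C at 1 by ring. apply Cmod_triangle. Qed.

Lemma Cmod_sub_sym (a b : C) : Cmod (a - b) = Cmod (b - a).
Proof. replace (a - b)%C with (- (b - a))%C by ring. apply Cmod_opp. Qed.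

Lemma Cmod_translate_lower (A : R) (a z : C) :
  A - Cmod z - Cmod (a - (z + RtoC A)) <= Cmod a.
Proof.
  pose proof (Cmod_le_add_sub (z + RtoC A) a) as Hsum.
  pose proof (Cmod_le_add_sub (RtoC A) (- z)) as HA.
  replace (RtoC A - - z)%C with (z + RtoC A)%C in HA by ring.
  rewrite Cmod_opp, Cmod_R in HA.
  rewrite Cmod_sub_sym in Hsum. pose proof (Rle_abs A). lra.
Qed.

Lemma Cmod_sub_translate_le (A : R) (a z w : C) :
  Cmod (w - z) <= Cmod (a - (z + RtoC A)) + Cmod (a - (w + RtoC A)).
Proof.
  pose proof (Cmod_le_add_sub (w - z) (w + RtoC A - a)) as H.
  replace (w - z - (w + RtoC A - a))%C with (a - (z + RtoC A))%C in H by ring.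
  rewrite (Cmod_sub_sym (w + RtoC A)) in H. lra.
Qed.

Lemma inv_INR_succ_pos (k : nat) : 0 < / (INR k + 1).
Proof. pose proof (pos_INR k). apply Rinv_0_lt_compat. lra. Qed.

Lemma inv_INR_succ_lt (d : R) : 0 < d -> exists k : nat, / (INR k + 1) < d.
Proof.
  intros Hd. destruct (INR_archimed d 1) as [k Hk]; [lra|].
  exists k. pose proof (pos_INR k).
  apply (Rmult_lt_reg_l (INR k + 1)); [lra|]. rewrite Rinv_r; [|lra]. nra.
Qed.

Lemma inv_INR_succ_le (k k' : nat) : (k <= k')%nat -> / (INR k' + 1) <= / (INR k + 1).
Proof.
  intros H. apply le_INR in H. pose proof (pos_INR k).
  apply Rinv_le_contravar; lra.
Qed.

Lemma INR_gt (r : R) : exists k : nat, r < INR k.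
Proof. destruct (INR_archimed 1 r) as [k Hk]; [lra|]. exists k. lra. Qed.

Lemma In_le_list_sum (l : list nat) (i : nat) : In i l -> (i <= list_sum l)%nat.
Proof.
  induction l as [|a l IH]; simpl; [tauto|].
  intros [->|Hi]; [lia|]. specialize (IH Hi). lia.
Qed.

Definition ball_interior (Q : C -> Prop) (w : C) : Prop :=
  exists r, 0 < r /\ forall v, Cmod (v - w) < r -> Q v.

Lemma open_ball_interior (Q : C -> Prop) : open (ball_interior Q).
Proof.
  intros w [r [Hr HQ]]. apply (@locally_le_locally_norm C_AbsRing C_NormedModule).
  exists (mkposreal (r/2) ltac:(lra)). intros v Hv.
  assert (Hvw : Cmod (v - w) < r/2) by exact Hv.
  exists (r/2). split; [lra|]. intros u Hu. apply HQ.
  pose proof (Cmod_le_add_sub (u - w) (u - v)) as H.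
  replace (u - w - (u - v))%C with (v - w)%C in H by ring. lra.
Qed.

(* A property increasing in [k] that holds near each point of a compact set
   for some [k] holds on the whole set for one [k]: take the sum of the
   indices of a finite subcover. *)
Lemma Ccompact_uniform_index (K : C -> Prop) (P : nat -> C -> Prop) :
  Ccompact K ->
  (forall k k' v, (k <= k')%nat -> P k v -> P k' v) ->
  (forall z, K z -> exists k, ball_interior (P k) z) ->
  exists k, forall z, K z -> P k z.
Proof.
  intros HK Hmono Hloc.
  destruct (HK nat (fun k => ball_interior (P k)) (fun k => open_ball_interior (P k)) Hloc)
    as [l Hl].
  exists (list_sum l). intros z Hz. destruct (Hl z Hz) as [i [Hi [r [Hr HP]]]].
  apply Hmono with i; [now apply In_le_list_sum|]. apply HP.
  replace (z - z)%C with (RtoC 0) by ring. rewrite Cmod_0. lra.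
Qed.

Lemma holomorphic_continuous_on_set (Om L : C -> Prop) (f : C -> C) :
  holomorphic_on Om f -> (forall z, L z -> Om z) -> continuous_on_set L f.
Proof.
  intros Hf HLOm z Hz eps Heps.
  assert (Hnear : locally (f z) (fun y : C => Cmod (y - f z) < eps)).
  { apply (@locally_le_locally_norm C_AbsRing C_NormedModule).
    exists (mkposreal eps Heps). intros y Hy. exact Hy. }
  destruct (ex_derive_continuous f z (Hf z (HLOm z Hz)) _ Hnear) as [r Hr].
  exists r. split; [apply cond_pos|]. intros w _ Hw. exact (Hr w Hw).
Qed.

Lemma Ccompact_image_bounded (K : C -> Prop) (h : C -> C) :
  Ccompact K -> continuous_on_set K h -> exists B : R, forall z, K z -> Cmod (h z) < B.
Proof.
  intros HK Hh.
  destruct (Ccompact_uniform_index K (fun k v => K v -> Cmod (h v) < INR k) HK)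
    as [k Hk].
  - intros k k' v Hkk' H Hv. apply le_INR in Hkk'. specialize (H Hv). lra.
  - intros z Hz.
    destruct (Hh z Hz 1 Rlt_0_1) as [r [Hr Hclose]].
    destruct (INR_gt (Cmod (h z) + 1)) as [k Hk].
    exists k, r. split; [exact Hr|]. intros v Hv HKv.
    specialize (Hclose v HKv Hv).
    pose proof (Cmod_le_add_sub (h v) (h z)). lra.
  - exists (INR k). intros z Hz. exact (Hk z Hz Hz).
Qed.

Lemma Ccompact_point_separated (K : C -> Prop) (w : C) :
  Ccompact K -> ~ K w -> exists k, forall u, K u -> / (INR k + 1) < Cmod (u - w).
Proof.
  intros HK Hw.
  apply (Ccompact_uniform_index K (fun k u => / (INR k + 1) < Cmod (u - w)) HK).
  - intros k k' v Hkk' H. pose proof (inv_INR_succ_le k k' Hkk'). lra.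
  - intros u Hu. set (d := Cmod (u - w)).
    assert (Hd : 0 < d).
    { apply Cmod_gt_0. intros H0. apply Hw.
      replace w with u; [exact Hu|]. replace u with ((u - w) + w)%C by ring.
      rewrite H0. ring. }
    destruct (inv_INR_succ_lt (d/2)) as [k Hk]; [lra|].
    exists k, (d/2). split; [lra|]. intros v Hv.
    pose proof (Cmod_le_add_sub (u - w) (v - w)) as H.
    replace (u - w - (v - w))%C with (u - v)%C in H by ring.
    rewrite (Cmod_sub_sym u v) in H. fold d in H. lra.
Qed.

Lemma Ccompact_disjoint_separated (I1 I2 : C -> Prop) :
  Ccompact I1 -> Ccompact I2 -> (forall z, I1 z -> I2 z -> False) ->
  exists d, 0 < d /\ forall w u, I1 w -> I2 u -> d < Cmod (u - w).
Proof.
  intros H1 H2 Hdisj.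
  destruct (Ccompact_uniform_index I1
              (fun k w => I1 w -> forall u, I2 u -> / (INR k + 1) < Cmod (u - w)) H1)
    as [k Hk].
  - intros k k' v Hkk' H Hv u Hu. pose proof (inv_INR_succ_le k k' Hkk').
    specialize (H Hv u Hu). lra.
  - intros w Hw.
    destruct (Ccompact_point_separated I2 w H2) as [k0 Hk0].
    { intros Hw2. exact (Hdisj w Hw Hw2). }
    pose proof (inv_INR_succ_pos k0) as He. set (e := / (INR k0 + 1)) in *.
    destruct (inv_INR_succ_lt (e/2)) as [k Hk]; [lra|].
    exists k, (e/2). split; [lra|]. intros v Hv _ u Hu.
    specialize (Hk0 u Hu). fold e in Hk0.
    pose proof (Cmod_le_add_sub (u - w) (u - v)) as H.
    replace (u - w - (u - v))%C with (v - w)%C in H by ring. lra.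
  - exists (/ (INR k + 1)). split; [apply inv_INR_succ_pos|].
    intros w u Hw Hu. exact (Hk w Hw Hw u Hu).
Qed.

Lemma continuous_on_set_id (J : C -> Prop) : continuous_on_set J (fun z => z).
Proof. intros z _ e He. exists e. split; [exact He|]. intros w _ Hwz. exact Hwz. Qed.

Lemma continuous_on_set_add_const (J : C -> Prop) (g : C -> C) (c : C) :
  continuous_on_set J g -> continuous_on_set J (fun z => (g z + c)%C).
Proof.
  intros Hg z Hz e He. destruct (Hg z Hz e He) as [d [Hd H]].
  exists d. split; [exact Hd|]. intros w Hw Hwz.
  replace (g w + c - (g z + c))%C with (g w - g z)%C by ring. auto.
Qed.

Lemma Cmod_sub_const_far (a : C) (e : R) :
  0 < e -> exists c : R, 0 <= c <= 2 * e /\ e <= Cmod (a - RtoC c).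
Proof.
  intros He. destruct (Rle_lt_dec e (Cmod a)) as [Ha|Ha].
  - exists 0. split; [lra|]. now replace (a - RtoC 0)%C with a by ring.
  - exists (2 * e). split; [lra|].
    pose proof (Cmod_le_add_sub (RtoC (2 * e)) a) as H.
    rewrite Cmod_R, Rabs_right, Cmod_sub_sym in H by lra. lra.
Qed.

Section ApproximationBeyond.

Variables (f : C -> C) (phi : nat -> C -> C) (J : C -> Prop).

Definition approximates (n : nat) (g : C -> C) (eps : R) : Prop :=
  forall z, J z -> Cmod (f (phi n z) - g z) < eps.

Hypothesis approx : forall g, continuous_on_set J g ->
  forall eps, 0 < eps -> exists n, approximates n g eps.

(* To skip index [N], aim at [g + c] where [c] is chosen so that [f o phi_N]
   is [eps/8]-far from [g + c] at some point of [J]. *)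
Lemma approximable_beyond (N : nat) (g : C -> C) (eps : R) :
  continuous_on_set J g -> 0 < eps ->
  exists n, (N <= n)%nat /\ approximates n g eps.
Proof.
  destruct (classic (exists z0, J z0)) as [[z0 Hz0]|HJ].
  2:{ intros _ _. exists N. split; [lia|]. intros z Hz. exfalso. eauto. }
  revert g eps. induction N as [|N IH]; intros g eps Hg Heps.
  - destruct (approx g Hg eps Heps) as [n Hn]. exists n. split; [lia|exact Hn].
  - destruct (Cmod_sub_const_far (f (phi N z0) - g z0) (eps/8)) as [c [Hc Hfar]]; [lra|].
    destruct (IH (fun z => (g z + RtoC c)%C) (eps/8)
                (continuous_on_set_add_const J g (RtoC c) Hg)) as [n [Hn Happ]]; [lra|].
    exists n. split.
    + destruct (Nat.eq_dec n N) as [->|Hne]; [|lia].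
      specialize (Happ z0 Hz0). simpl in Happ.
      replace (f (phi N z0) - g z0 - RtoC c)%C
        with (f (phi N z0) - (g z0 + RtoC c))%C in Hfar by ring. lra.
    + intros z Hz. specialize (Happ z Hz). simpl in Happ.
      pose proof (Cmod_le_add_sub (f (phi n z) - g z) (f (phi n z) - (g z + RtoC c))) as H.
      replace (f (phi n z) - g z - (f (phi n z) - (g z + RtoC c)))%C with (RtoC c) in H
        by ring.
      rewrite Cmod_R, Rabs_right in H by lra. lra.
Qed.

End ApproximationBeyond.

Theorem mainTheorem13
  (Om G : C -> Prop) (phi : nat -> C -> C) (M : (C -> Prop) -> Prop)
  (HOm : Cdomain Om)
  (HGc : closed G) (HGi : empty_interior G)
  (Hphi : forall n z, G z -> Om (phi n z))
  (Hphic : forall n, continuous_on_set G (phi n))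
  (HMc : countable_family M)
  (HMK : forall K, M K -> Ccompact K /\ (forall z, K z -> G z))
  (Huniv : exists f : C -> C, holomorphic_on Om f /\ universal f phi M) :
  forall L K I1 I2 : C -> Prop,
    Ccompact L -> (forall z, L z -> Om z) ->
    M K -> M I1 -> M I2 -> (forall z, I1 z -> I2 z -> False) ->
    M (fun z => K z \/ I1 z \/ I2 z) ->
    forall N : nat, exists n : nat, (N <= n)%nat /\
      (forall z, K z -> ~ L (phi n z)) /\
      (forall z w, I1 z -> I2 w -> phi n z <> phi n w).
Proof.
  intros L K I1 I2 HL HLOm HK HI1 HI2 Hdisj HJ N.
  destruct Huniv as [f [Hf Hu]].
  set (J := fun z => K z \/ I1 z \/ I2 z).
  destruct (Ccompact_image_bounded L f HL
              (holomorphic_continuous_on_set Om L f Hf HLOm)) as [BL HBL].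
  destruct (Ccompact_image_bounded J (fun z => z) (proj1 (HMK J HJ))
              (continuous_on_set_id J)) as [BJ HBJ].
  destruct (Ccompact_disjoint_separated I1 I2 (proj1 (HMK I1 HI1)) (proj1 (HMK I2 HI2)) Hdisj)
    as [d [Hd Hsep]].
  set (A := BL + BJ + 1). set (eps := Rmin (d/2) 1).
  assert (Heps : 0 < eps) by (apply Rmin_glb_lt; lra).
  destruct (approximable_beyond f phi J (Hu J HJ) N _ eps
              (continuous_on_set_add_const J _ (RtoC A) (continuous_on_set_id J)) Heps)
    as [n [Hn Happ]].
  assert (Heps_le : eps <= d/2 /\ eps <= 1) by (split; [apply Rmin_l|apply Rmin_r]).
  exists n. split; [exact Hn|split].
  - intros z Hz HLz.
    assert (HJz : J z) by (left; exact Hz).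
    pose proof (Cmod_translate_lower A (f (phi n z)) z).
    pose proof (Happ z HJz : Cmod (f (phi n z) - (z + RtoC A)) < eps).
    pose proof (HBJ z HJz). pose proof (HBL _ HLz). unfold A in *. lra.
  - intros z w Hz Hw Heq.
    pose proof (Cmod_sub_translate_le A (f (phi n z)) z w) as Hzw. rewrite Heq in Hzw at 2.
    pose proof (Happ z (or_intror (or_introl Hz)) : Cmod (f (phi n z) - (z + RtoC A)) < eps).
    pose proof (Happ w (or_intror (or_intror Hw)) : Cmod (f (phi n w) - (w + RtoC A)) < eps).
    pose proof (Hsep z w Hz Hw). lra.
Qed.
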